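(* Suppose there exists a Whitney-maximum graph in $\mathcal{C}_{n,m}$. Then every uniformly most reliable graph in $\mathcal{C}_{n,m}$ is a $0$-element in $\mathcal{C}_{n,m}$.
   Context: $\mathcal{C}_{n,m}$ denotes the set of all connected simple graphs on $n$ vertices and $m$ edges. For a graph $G$ with vertex set $V$, $\kappa(G)$ is its number of connected components, $r(G)=|V|-\kappa(G)$, $c(G)=|E(G)|-|V|+\kappa(G)$. $\mathcal{S}(G)$ is the set of all spanning subgraphs of $G$. The Whitney polynomial is $W_G(x,y)=\sum_{H\in\mathcal{S}(G)}x^{r(G)-r(H)}y^{c(H)}$. A bivariate polynomial is nonnegative if all its coefficients are nonnegative real numbers. $G\in\mathcal{C}_{n,m}$ is Whitney-maximum if for every $H\in\mathcal{C}_{n,m}$ there is a nonnegative polynomial $Q_H$ with $W_G(x,y)-W_H(x,y)=(1-xy)Q_H(x,y)$. $N_i^{(1)}(G)$ is the number of connected spanning subgraphs of $G$ with exactly $i$ edges, and $R_G^{(1)}(p)=\sum_{i=0}^m N_i^{(1)}(G)p^i(1-p)^{m-i}$. A graph $G\in\mathcal{C}_{n,m}$ is uniformly most reliable if $R_G^{(1)}(p)\ge R_H^{(1)}(p)$ for all $H\in\mathcal{C}_{n,m}$ and $p\in[0,1]$. $G\in\mathcal{C}_{n,m}$ is a $0$-element in $\mathcal{C}_{n,m}$ if $N_i^{(1)}(G)\ge N_i^{(1)}(H)$ for all $i\in\{0,\ldots,m\}$ and all $H\in\mathcal{C}_{n,m}$. *)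

From HB Require Import structures.
From mathcomp Require Import all_boot all_order all_algebra.
From mathcomp Require Import Rstruct.
Set Implicit Arguments. Unset Strict Implicit. Unset Printing Implicit Defensive.
Import Order.TTheory GRing.Theory Num.Theory.

(* A simple graph on the vertex set 'I_n is a set of edges, each edge being
   a 2-element subset of 'I_n.  Spanning subgraphs are subsets of the edge set. *)
Definition graph (n : nat) := {set {set 'I_n}}.

Definition simple_graph n (G : graph n) : Prop :=
  forall e, e \in G -> #|e| = 2%N.

Definition adj n (G : graph n) : rel 'I_n := fun x y => [set x; y] \in G.

Definition kappa n (G : graph n) : nat :=
  #|[set [set y | connect (adj G) x y] | x : 'I_n]|.

Definition rk n (G : graph n) : nat := (n - kappa G)%N.
Definition nullity n (G : graph n) : nat := (#|G| + kappa G - n)%N.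

Definition connected_graph n (G : graph n) : Prop := kappa G = 1%N.

Definition inC (n m : nat) (G : graph n) : Prop :=
  [/\ simple_graph G, #|G| = m & connected_graph G].

Local Open Scope ring_scope.

(* Bivariate polynomials over R: {poly {poly Rdefinitions.R}}, inner variable x, outer y. *)
Definition varx : {poly {poly Rdefinitions.R}} := ('X)%:P.
Definition vary : {poly {poly Rdefinitions.R}} := 'X.

Definition whitney n (G : graph n) : {poly {poly Rdefinitions.R}} :=
  \sum_(H in powerset G) varx ^+ (rk G - rk H) * vary ^+ (nullity H).

Definition nonneg_poly2 (Q : {poly {poly Rdefinitions.R}}) : Prop :=
  forall i j, 0 <= (Q`_i)`_j.

Definition whitney_maximum n m (G : graph n) : Prop :=
  inC m G /\
  forall H : graph n, inC m H ->
    exists Q : {poly {poly Rdefinitions.R}}, nonneg_poly2 Q /\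
      whitney G - whitney H = (1 - varx * vary) * Q.

Definition Nconn n (G : graph n) (i : nat) : nat :=
  #|[set H in powerset G | (kappa H == 1%N) && (#|H| == i)]|.

Definition reliability n (G : graph n) (p : Rdefinitions.R) : Rdefinitions.R :=
  \sum_(i < #|G|.+1) (Nconn G i)%:R * p ^+ i * (1 - p) ^+ (#|G| - i).

Definition uniformly_most_reliable n m (G : graph n) : Prop :=
  inC m G /\
  forall H : graph n, inC m H ->
    forall p : Rdefinitions.R, 0 <= p <= 1 -> reliability H p <= reliability G p.

Definition zero_element n m (G : graph n) : Prop :=
  inC m G /\
  forall H : graph n, inC m H ->
    forall i : nat, (i <= m)%N -> (Nconn H i <= Nconn G i)%N.

From mathcomp Require Import all_boot all_order all_algebra.
From mathcomp Require Import Rstruct zify lra.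
Set Implicit Arguments. Unset Strict Implicit. Unset Printing Implicit Defensive.
Import Order.TTheory GRing.Theory Num.Theory.

(* The coefficient of x^0 y^j in W_G counts the spanning subgraphs of G of full
   rank and nullity j, i.e. the connected spanning subgraphs with n - 1 + j
   edges.  As (1 - xy) Q has the same x^0 coefficients as Q, a Whitney-maximum
   graph W dominates every graph of C_{n,m} in all the counts N_i^(1): W is a
   0-element.  If G is uniformly most reliable then R_G(1/2) >= R_W(1/2), while
   R_W(1/2) - R_G(1/2) is a positive combination of the nonnegative differences
   N_i(W) - N_i(G); hence G has the same counts as W and is a 0-element too. *)

Section Components.

Variable n : nat.
Implicit Types (H : graph n) (a b x y z : 'I_n).

Lemma adj_sym H : symmetric (adj H).
Proof. by move=> x y; rewrite /adj setUC. Qed.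

Lemma connect_adj_sym H x y : connect (adj H) x y = connect (adj H) y x.
Proof. exact: (sym_connect_sym (@adj_sym H)). Qed.

Definition component H x : {set 'I_n} := [set y | connect (adj H) x y].

Lemma kappaE H : kappa H = #|[set component H x | x : 'I_n]|.
Proof. by []. Qed.

Lemma component_eq H x y : connect (adj H) x y -> component H x = component H y.
Proof.
move=> cxy; apply/setP=> z; rewrite !inE; apply/idP/idP; last exact: connect_trans.
by apply: connect_trans; rewrite connect_adj_sym.
Qed.

Definition reaches_edge H a b x := connect (adj H) x a || connect (adj H) x b.

(* A path using the new edge {a, b} passes through a or b. *)
Lemma connect_add_edge H a b x y :
  connect (adj ([set a; b] |: H)) x y ->
  connect (adj H) x y \/ reaches_edge H a b x && reaches_edge H a b y.
Proof.
have ab_reaches u : u \in [set a; b] -> reaches_edge H a b u.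
  by rewrite /reaches_edge !inE => /orP[] /eqP->; rewrite connect0 ?orbT.
move=> /connectP[p + ->] {y}; elim: p x => [|z p IH] x /=.
  by left; rewrite connect0.
case/andP; rewrite /adj in_setU1 => /orP[/eqP exz | Hxz] /IH[Hz | /andP[Rz Ry]].
- have /ab_reaches Rx : x \in [set a; b] by rewrite -exz !inE eqxx.
  have /ab_reaches Rz : z \in [set a; b] by rewrite -exz !inE eqxx orbT.
  right; rewrite Rx /=; case/orP: Rz => [za|zb]; apply/orP.
    by left; apply: connect_trans za; rewrite connect_adj_sym.
  by right; apply: connect_trans zb; rewrite connect_adj_sym.
- have /ab_reaches Rx : x \in [set a; b] by rewrite -exz !inE eqxx.
  by right; rewrite Rx.
- by left; apply: connect_trans Hz; apply: connect1.
right; rewrite Ry andbT; have xz : connect (adj H) x z by apply: connect1.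
by case/orP: Rz => zab; apply/orP; [left|right]; apply: connect_trans zab.
Qed.

Lemma kappa_set0 : kappa (set0 : graph n) = n.
Proof.
have comp0 : component set0 =1 set1.
  move=> x; apply/setP=> y; rewrite !inE; apply/idP/eqP => [|->]; last exact: connect0.
  by case/connectP=> -[|z p] //= /andP[]; rewrite /adj inE.
by rewrite kappaE (eq_imset _ comp0) card_imset ?card_ord //; apply: set1_inj.
Qed.

Lemma kappa_le H : kappa H <= n.
Proof. by rewrite kappaE (leq_trans (leq_imset_card _ _)) ?card_ord. Qed.

Lemma kappa_gt0 H : 0 < n -> 0 < kappa H.
Proof.
move=> n_gt0; rewrite kappaE; apply/card_gt0P.
by exists (component H (Ordinal n_gt0)); apply: imset_f.
Qed.

End Components.

Lemma leq_card_imset_factor (aT rT rT' : finType) (f : aT -> rT) (g : aT -> rT')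
    (A : {set aT}) :
  {in A &, forall x y, g x = g y -> f x = f y} -> #|f @: A| <= #|g @: A|.
Proof.
move=> gf; have [->|[x0 _]] := set_0Vmem A; first by rewrite !imset0 cards0.
pose h C := if [pick x in A | g x == C] is Some x then f x else f x0.
suff -> : f @: A = h @: (g @: A) by apply: leq_imset_card.
have hg x : x \in A -> h (g x) = f x.
  move=> xA; rewrite /h; case: pickP => [y /andP[yA /eqP]|/(_ x)]; last first.
    by rewrite xA eqxx.
  exact: gf.
apply/setP=> C; apply/imsetP/imsetP => [[x xA ->]|[_ /imsetP[x xA ->] ->]].
  by exists (g x); [apply: imset_f | rewrite hg].
by exists x; rewrite ?hg.
Qed.

(* Components not reaching b are untouched by the new edge {a, b}; the ones
   reaching b account for at most one more component of H. *)
Lemma kappa_add_edge n (H : graph n) (a b : 'I_n) :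
  kappa H <= (kappa ([set a; b] |: H)).+1.
Proof.
set H' := [set a; b] |: H; pose D := [set x | connect (adj H) x b].
rewrite !kappaE -add1n.
apply: (@leq_trans (#|component H @: D| + #|component H @: ~: D|)).
  rewrite (leq_trans _ (leq_card_setU _ _)) // subset_leq_card //.
  apply/subsetP=> _ /imsetP[x _ ->]; rewrite in_setU.
  case: (boolP (x \in D)) => xD; first by rewrite imset_f.
  by rewrite orbC imset_f // in_setC xD.
apply: leq_add.
  rewrite -(cards1 (component H b)) subset_leq_card //.
  apply/subsetP=> _ /imsetP[x xD ->]; rewrite inE in xD.
  by rewrite inE (component_eq xD).
apply: (@leq_trans #|component H' @: ~: D|); last first.
  by rewrite subset_leq_card //; apply/subsetP=> _ /imsetP[x _ ->]; apply: imset_f.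
apply: leq_card_imset_factor => x y; rewrite !inE => xD yD exy.
have : y \in component H' x by rewrite exy inE connect0.
rewrite inE => /connect_add_edge[|/andP[]]; first exact: component_eq.
rewrite /reaches_edge (negbTE xD) (negbTE yD) !orbF => xa ya.
by apply: component_eq; apply: connect_trans xa _; rewrite connect_adj_sym.
Qed.

Lemma simple_graph_sub n (G K : graph n) :
  simple_graph G -> K \subset G -> simple_graph K.
Proof. by move=> sG /subsetP sKG e /sKG; apply: sG. Qed.

Lemma kappa_add_card_ge n (H : graph n) : simple_graph H -> n <= kappa H + #|H|.
Proof.
move: {2}#|H| (erefl #|H|) => k; elim: k H => [|k IH] H cardH sH.
  by move/eqP: cardH; rewrite cards_eq0 => /eqP->; rewrite kappa_set0 cards0 addn0.
have [e eH] : exists e, e \in H by apply/card_gt0P; rewrite cardH.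
have /eqP/cards2P[a [b [_ eab]]] := sH e eH.
have cardHe : #|H :\ e| = k by move: (cardsD1 e H); rewrite eH cardH add1n => -[].
have := IH _ cardHe (simple_graph_sub sH (subD1set H e)).
have := kappa_add_edge (H :\ e) a b; rewrite -eab setD1K // cardH cardHe; lia.
Qed.

Definition Nfull n (G : graph n) (j : nat) : nat :=
  #|[set H in powerset G | (rk G - rk H == 0)%N && (nullity H == j)]|.

Local Open Scope ring_scope.

Lemma coef_monomial a b j :
  ((varx ^+ a * vary ^+ b)`_j)`_0 = ((a == 0)%N && (b == j))%:R.
Proof.
rewrite /varx /vary -rmorphXn coefCM coefXn eq_sym.
by case: (b == j); rewrite ?mulr1 ?mulr0 ?coef0 ?andbF // coefXn andbT eq_sym.
Qed.

Lemma coef_whitney n (G : graph n) j : (whitney G)`_j`_0 = (Nfull G j)%:R.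
Proof.
rewrite /whitney !coef_sum /Nfull -sum1_card natr_sum big_mkcond [RHS]big_mkcond /=.
apply: eq_bigr => H _; rewrite coef_monomial !inE.
by case: (H \subset G) => //=; case: (_ && _).
Qed.

Lemma coef_one_sub_xy_mul (Q : {poly {poly Rdefinitions.R}}) j :
  ((1 - varx * vary) * Q)`_j`_0 = Q`_j`_0.
Proof. by rewrite mulrBl mul1r -mulrA coefB /varx coefCM coefB coefXM eqxx subr0. Qed.

Lemma whitney_maximum_Nfull n m (W H : graph n) j :
  whitney_maximum m W -> inC m H -> (Nfull H j <= Nfull W j)%N.
Proof.
case=> _ /(_ H) hW /hW[Q [Q_ge0 eWH]].
have : 0 <= (whitney W - whitney H)`_j`_0 by rewrite eWH coef_one_sub_xy_mul.
by rewrite !coefB !coef_whitney subr_ge0 ler_nat.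
Qed.

Local Close Scope ring_scope.

(* In a connected simple graph, a spanning subgraph is connected iff it has
   full rank, and then it has n - 1 + nullity edges. *)
Lemma Nconn_Nfull n (G : graph n) i :
  simple_graph G -> connected_graph G -> n.-1 <= i -> Nconn G i = Nfull G (i - n.-1).
Proof.
move=> sG cG le_n_i; apply: eq_card => K; rewrite !inE.
case sKG: (K \subset G) => //=.
have n_gt0 : 0 < n by move: (kappa_le G); rewrite cG.
have := kappa_add_card_ge (simple_graph_sub sG sKG).
have := kappa_le K; have := kappa_gt0 K n_gt0.
rewrite /rk /nullity cG; move: (kappa K) #|K| => kK cK *.
by apply/andP/andP => -[/eqP h1 /eqP h2]; split; apply/eqP; lia.
Qed.

Lemma Nconn_small n (G : graph n) i : simple_graph G -> i < n.-1 -> Nconn G i = 0.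
Proof.
move=> sG lt_i_n; apply: eq_card0 => K; rewrite !inE.
apply/negP => /andP[sKG /andP[/eqP kK /eqP cK]].
by have := kappa_add_card_ge (simple_graph_sub sG sKG); rewrite kK cK; lia.
Qed.

Lemma whitney_maximum_zero_element n m (W : graph n) :
  whitney_maximum m W -> zero_element m W.
Proof.
move=> hW; have [sW _ cW] := hW.1; split=> [|H hH i _]; first exact: hW.1.
have [sH _ cH] := hH; have [lt_i_n | le_n_i] := ltnP i n.-1.
  by rewrite Nconn_small.
rewrite (Nconn_Nfull sH) // (Nconn_Nfull sW) //.
exact: whitney_maximum_Nfull hW hH.
Qed.

Local Open Scope ring_scope.

Lemma eq_weighted_sum_le (I : finType) (R : realDomainType) (a b w : I -> R) :
  (forall i, b i <= a i) -> (forall i, 0 < w i) ->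
  \sum_i a i * w i <= \sum_i b i * w i -> forall i, a i = b i.
Proof.
move=> le_ba w_gt0 le_sum i.
have d_ge0 k : 0 <= (a k - b k) * w k by rewrite mulr_ge0 ?subr_ge0 ?le_ba ?ltW ?w_gt0.
have sum_d0 : \sum_k (a k - b k) * w k = 0.
  apply/eqP; rewrite eq_le sumr_ge0 // andbT.
  by under eq_bigr do rewrite mulrBl; rewrite sumrB subr_le0.
have /eqP := psumr_eq0P (fun k _ => d_ge0 k) sum_d0 (i := i) isT.
by rewrite mulf_eq0 (gt_eqF (w_gt0 i)) orbF subr_eq0 => /eqP.
Qed.

Lemma uniformly_most_reliable_Nconn n m (W G : graph n) :
  zero_element m W -> uniformly_most_reliable m G ->
  forall i, (i <= m)%N -> Nconn G i = Nconn W i.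
Proof.
move=> [hW W_max] [hG G_umr] i le_i_m.
have [[_ cardW _] [_ cardG _]] := (hW, hG).
pose p : Rdefinitions.R := 2^-1.
have p01 : 0 <= p <= 1 by apply/andP; split; rewrite /p; lra.
pose w (k : 'I_m.+1) := p ^+ k * (1 - p) ^+ (m - k).
have w_gt0 k : 0 < w k by rewrite mulr_gt0 // exprn_gt0 // /p; lra.
have reliabilityE (H : graph n) :
    #|H| = m -> reliability H p = \sum_(k < m.+1) (Nconn H k)%:R * w k.
  by move=> cardH; rewrite /reliability cardH; apply: eq_bigr => k _; rewrite mulrA.
have le_GW (k : 'I_m.+1) : (Nconn G k)%:R <= (Nconn W k)%:R :> Rdefinitions.R.
  by rewrite ler_nat W_max // -ltnS.
have := G_umr W hW p p01; rewrite !reliabilityE // => le_rel.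
have /eqP := eq_weighted_sum_le le_GW w_gt0 le_rel (Ordinal (le_i_m : (i < m.+1)%N)).
by rewrite eqr_nat eq_sym => /eqP.
Qed.

Theorem mainTheorem8 (n m : nat) :
  (exists W : graph n, whitney_maximum m W) ->
  forall G : graph n, uniformly_most_reliable m G -> zero_element m G.
Proof.
move=> [W /whitney_maximum_zero_element W0] G G_umr; split=> [|H hH i le_i_m].
  exact: G_umr.1.
by rewrite (uniformly_most_reliable_Nconn W0 G_umr) //; apply: W0.2.
Qed.
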